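(* Let $d\ge1$. Let $G_A=(V_A,E_A)$ with configuration $\mathbf{p}^A$ and $G_B=(V_B,E_B)$ with configuration $\mathbf{p}^B$ be two universally rigid frameworks in general position in $\mathbb{R}^d$, with $V_C=V_A\cap V_B$ a proper subset of both $V_A$ and $V_B$, $|V_C|\ge d+1$, and $\mathbf{p}^A_i=\mathbf{p}^B_i$ for $i\in V_C$. Let $F$ be the set of edges $\{i,j\}\in E_B\setminus E_A$ with $i,j\in V_C$. Then the edge-reduced framework attachment, i.e. the framework with graph $(V_A\cup V_B,(E_A\cup E_B)\setminus F)$ and configuration $\mathbf{p}$ (where $\mathbf{p}_i=\mathbf{p}^A_i$ for $i\in V_A$, $\mathbf{p}_i=\mathbf{p}^B_i$ for $i\in V_B$), is universally rigid.
   Context: A framework $G(\mathbf{p})$ in $\mathbb{R}^d$ is a finite graph $G=(V,E)$ with points $\mathbf{p}_i\in\mathbb{R}^d$, $i\in V$. It is in general position if any $d+1$ distinct vertices have affinely independent points. $G(\mathbf{p})$ and $G(\mathbf{q})$ are equivalent if they have equal lengths $\|\mathbf{p}_i-\mathbf{p}_j\|=\|\mathbf{q}_i-\mathbf{q}_j\|$ on all edges, and congruent if these equalities hold for all pairs of vertices. $G(\mathbf{p})$ in $\mathbb{R}^d$ is universally rigid if for every $d'\ge d$ every framework $G(\mathbf{q})$ in $\mathbb{R}^{d'}$ equivalent to it is congruent to it. The roles of $G_A$ and $G_B$ are interchangeable: the removed edges are those between shared vertices present in only one (fixed) of the two frameworks. *)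

From HB Require Import structures.
From mathcomp Require Import all_boot all_order all_algebra.
From mathcomp Require Import reals.
Set Implicit Arguments. Unset Strict Implicit. Unset Printing Implicit Defensive.
Import Order.TTheory GRing.Theory Num.Theory.
Local Open Scope ring_scope.

Definition edist (R : realType) (n : nat) (x y : 'rV[R]_n) : R :=
  Num.sqrt (\sum_(k < n) (x 0 k - y 0 k) ^+ 2).

Definition is_graph (V : finType) (Vs : {set V}) (E : rel V) : Prop :=
  (forall i j, E i j = E j i) /\ (forall i, ~~ E i i) /\
  (forall i j, E i j -> (i \in Vs) && (j \in Vs)).

Definition aff_indep (R : realType) (n m : nat) (x : 'I_m -> 'rV[R]_n) : Prop :=
  forall c : 'I_m -> R, \sum_(i < m) c i = 0 -> \sum_(i < m) c i *: x i = 0 ->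
    forall i, c i = 0.

Definition general_position (R : realType) (d : nat) (V : finType)
    (Vs : {set V}) (p : V -> 'rV[R]_d) : Prop :=
  forall f : 'I_d.+1 -> V, injective f -> (forall i, f i \in Vs) ->
    aff_indep (fun i => p (f i)).

Definition equivalent (R : realType) (d d' : nat) (V : finType) (E : rel V)
    (p : V -> 'rV[R]_d) (q : V -> 'rV[R]_d') : Prop :=
  forall i j, E i j -> edist (q i) (q j) = edist (p i) (p j).

Definition congruent (R : realType) (d d' : nat) (V : finType) (Vs : {set V})
    (p : V -> 'rV[R]_d) (q : V -> 'rV[R]_d') : Prop :=
  forall i j, i \in Vs -> j \in Vs -> edist (q i) (q j) = edist (p i) (p j).

Definition universally_rigid (R : realType) (d : nat) (V : finType)
    (Vs : {set V}) (E : rel V) (p : V -> 'rV[R]_d) : Prop :=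
  forall (d' : nat), (d <= d')%N -> forall q : V -> 'rV[R]_d',
    equivalent E p q -> congruent Vs p q.

Definition removed_edges (V : finType) (VA VB : {set V}) (EA EB : rel V) : rel V :=
  fun i j => [&& EB i j, ~~ EA i j, i \in VA :&: VB & j \in VA :&: VB].

Definition attach_edges (V : finType) (VA VB : {set V}) (EA EB : rel V) : rel V :=
  fun i j => (EA i j || EB i j) && ~~ removed_edges VA VB EA EB i j.

Definition attach_conf (R : realType) (d : nat) (V : finType) (VA : {set V})
    (pA pB : V -> 'rV[R]_d) : V -> 'rV[R]_d :=
  fun i => if i \in VA then pA i else pB i.

From HB Require Import structures.
From mathcomp Require Import all_boot all_order all_algebra.
From mathcomp Require Import reals.
From mathcomp Require Import ring.
Set Implicit Arguments. Unset Strict Implicit. Unset Printing Implicit Defensive.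
Import Order.TTheory GRing.Theory Num.Theory.
Local Open Scope ring_scope.

(** Both frameworks force [q] to be congruent to [p] on their own vertex sets
   (the edges of [F] are recovered because [G_A] already fixes all distances
   inside [V_A]).  Fix [d+1] shared vertices [c] whose points are affinely
   independent.  By the Gram identity
   [sum_(i,j) g_i g_j |x_i - x_j|^2 = -2 |sum_i g_i x_i|^2] for weights with
   [sum_i g_i = 0], an affine dependency [p_x = sum_k b_k p_(c k)] inside
   [V_A] or inside [V_B] holds for [q] as well; so [q] is the affine image of
   [p] on [V_A ∪ V_B], and the same identity shows it preserves all distances. *)

Lemma big_option (M : nmodType) (I : finType) (F : option I -> M) :
  \sum_o F o = F None + \sum_i F (Some i).
Proof.
rewrite (bigD1 None) //=; congr (_ + _).
rewrite (reindex_omap Some (fun o => o)) //=; last by case.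
by apply: eq_bigl => i; rewrite eqxx.
Qed.

Section SquaredDistance.

Variables (R : realFieldType) (n : nat).
Implicit Types x y : 'rV[R]_n.

Definition dotv x y : R := \sum_(k < n) x 0 k * y 0 k.

Definition sqdist x y : R := \sum_(k < n) (x 0 k - y 0 k) ^+ 2.

Lemma sqdistE x y : sqdist x y = dotv (x - y) (x - y).
Proof. by apply: eq_bigr => k _; rewrite !mxE expr2. Qed.

Lemma sqdistC x y : sqdist x y = sqdist y x.
Proof. by apply: eq_bigr => k _; rewrite -sqrrN opprB. Qed.

Lemma sqdist_ge0 x y : 0 <= sqdist x y.
Proof. by apply: sumr_ge0 => k _; exact: sqr_ge0. Qed.

Lemma sqdistxx x : sqdist x x = 0.
Proof. by apply: big1 => k _; rewrite subrr expr0n. Qed.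

Lemma dotv0r x : dotv x 0 = 0.
Proof. by apply: big1 => k _; rewrite mxE mulr0. Qed.

Lemma sqdist_dotv x y : sqdist x y = dotv x x + dotv y y - 2 * dotv x y.
Proof.
rewrite /sqdist /dotv mulr_sumr -big_split -sumrB /=.
by apply: eq_bigr => k _; ring.
Qed.

Lemma dotv_eq0 x : dotv x x = 0 -> x = 0.
Proof.
move/eqP; rewrite psumr_eq0 => [/allP x0|k _]; last by rewrite -expr2 sqr_ge0.
apply/rowP => k; rewrite mxE.
by apply/eqP; rewrite -sqrf_eq0 expr2; exact: x0 (mem_index_enum _).
Qed.

Lemma dotv_sum (I : finType) (g : I -> R) (P : I -> 'rV[R]_n) :
  dotv (\sum_i g i *: P i) (\sum_i g i *: P i) =
  \sum_i \sum_j g i * g j * dotv (P i) (P j).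
Proof.
rewrite /dotv; under eq_bigr => k _ do rewrite !summxE big_distrlr /=.
rewrite exchange_big /=; apply: eq_bigr => i _.
rewrite exchange_big /=; apply: eq_bigr => j _.
by rewrite mulr_sumr; apply: eq_bigr => k _; rewrite !mxE; ring.
Qed.

(* The squared norms [dotv (P i) (P i)] of [sqdist_dotv] cancel because the
   weights sum to zero. *)
Lemma sqdist_zero_sum (I : finType) (g : I -> R) (P : I -> 'rV[R]_n) :
  \sum_i g i = 0 ->
  \sum_i \sum_j g i * g j * sqdist (P i) (P j) =
  - 2 * dotv (\sum_i g i *: P i) (\sum_i g i *: P i).
Proof.
move=> g0; rewrite dotv_sum mulr_sumr.
pose N j := g j * dotv (P j) (P j).
transitivity (\sum_i (g i * \sum_j N j - 2 * \sum_j g i * g j * dotv (P i) (P j))).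
  apply: eq_bigr => i _.
  have -> : \sum_j g i * g j * sqdist (P i) (P j) =
      g i * dotv (P i) (P i) * \sum_j g j + g i * \sum_j N j
      - 2 * \sum_j g i * g j * dotv (P i) (P j).
    rewrite [_ * \sum_j g j]mulr_sumr [g i * \sum_j N j]mulr_sumr.
    rewrite [2 * _]mulr_sumr -big_split -sumrB /=.
    by apply: eq_bigr => j _; rewrite sqdist_dotv /N; ring.
  by rewrite g0 mulr0 add0r.
rewrite sumrB -mulr_suml g0 mul0r sub0r -sumrN.
by apply: eq_bigr => i _; rewrite mulNr.
Qed.

End SquaredDistance.

Lemma dotv_zero_sum_comb (R : realFieldType) (n n' : nat) (I : finType)
    (P : I -> 'rV[R]_n) (Q : I -> 'rV[R]_n') (g : I -> R) :
  (forall i j, sqdist (Q i) (Q j) = sqdist (P i) (P j)) -> \sum_i g i = 0 ->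
  dotv (\sum_i g i *: Q i) (\sum_i g i *: Q i) =
  dotv (\sum_i g i *: P i) (\sum_i g i *: P i).
Proof.
move=> PQ g0; apply: (@mulfI _ (-2)); first by rewrite oppr_eq0 pnatr_eq0.
by rewrite -!sqdist_zero_sum //; under eq_bigr do under eq_bigr do rewrite PQ.
Qed.

Lemma affine_comb_transfer (R : realFieldType) (n n' : nat) (I : finType)
    (P : I -> 'rV[R]_n) (Q : I -> 'rV[R]_n') (x : 'rV[R]_n) (x' : 'rV[R]_n')
    (b : I -> R) :
  (forall i j, sqdist (Q i) (Q j) = sqdist (P i) (P j)) ->
  (forall i, sqdist x' (Q i) = sqdist x (P i)) -> \sum_i b i = 1 ->
  x = \sum_i b i *: P i -> x' = \sum_i b i *: Q i.
Proof.
move=> PQ xQ b1 xP.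
pose ext m (y : 'rV[R]_m) (F : I -> 'rV[R]_m) o := if o is Some i then F i else y.
pose g o := if o is Some i then - b i else 1.
have g0 : \sum_o g o = 0 by rewrite big_option sumrN b1 subrr.
have extPQ o o' :
    sqdist (ext _ x' Q o) (ext _ x' Q o') = sqdist (ext _ x P o) (ext _ x P o').
  case: o => [i|]; case: o' => [j|] /=.
  - exact: PQ.
  - by rewrite sqdistC xQ sqdistC.
  - exact: xQ.
  - by rewrite !sqdistxx.
have := dotv_zero_sum_comb extPQ g0.
have combE m (y : 'rV[R]_m) F :
    \sum_o g o *: (if o is Some i then F i else y) = y - \sum_i b i *: F i.
  rewrite big_option scale1r -sumrN; congr (_ + _).
  by apply: eq_bigr => i _; rewrite scaleNr.
rewrite /ext !combE -xP subrr.
by rewrite dotv0r => /dotv_eq0/eqP; rewrite subr_eq0 => /eqP.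
Qed.

Section AffineFrames.

Variable R : realType.

Lemma eq_aff_indep n m (x y : 'I_m -> 'rV[R]_n) :
  x =1 y -> aff_indep x -> aff_indep y.
Proof.
move=> xy indx c c0 cy; apply: indx c0 _.
by under eq_bigr do rewrite xy.
Qed.

(* [coef z v] has total weight [z] and combines the points [P i] into
   [z *: P ord0 + v *m U]; an affine dependency is [coef 0 v] for [v] in the
   kernel of [U], so [U] is invertible. *)
Lemma aff_indep_span n (P : 'I_n.+1 -> 'rV[R]_n) : aff_indep P ->
  forall y, exists2 b : 'I_n.+1 -> R, \sum_i b i = 1 & y = \sum_i b i *: P i.
Proof.
move=> indP y.
pose U : 'M[R]_n := \matrix_k (P (lift ord0 k) - P ord0).
pose coef z (v : 'rV[R]_n) i :=
  if unlift ord0 i is Some k then v 0 k else z - \sum_k v 0 k.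
have sum_coef z v : \sum_i coef z v i = z.
  rewrite big_ord_recl /coef unlift_none.
  by under [X in _ + X = _]eq_bigr do rewrite liftK; rewrite subrK.
have comb_coef z v : \sum_i coef z v i *: P i = z *: P ord0 + v *m U.
  rewrite big_ord_recl /coef unlift_none mulmx_sum_row.
  under [X in _ + X = _]eq_bigr do rewrite liftK.
  under [X in _ = _ + X]eq_bigr do rewrite rowK.
  rewrite scalerBl scaler_suml -addrA; congr (_ + _).
  by rewrite addrC -sumrB; apply: eq_bigr => k _; rewrite scalerBr.
have freeU : row_free U.
  rewrite -kermx_eq0 -submx0; apply/row_subP => i.
  set v := row i (kermx U).
  have vU : v *m U = 0 by apply/sub_kermxP; exact: row_sub.
  have c0 := indP (coef 0 v) (sum_coef 0 v).
  rewrite comb_coef vU scale0r addr0 in c0.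
  suff -> : v = 0 by rewrite sub0mx.
  by apply/rowP => k; rewrite [RHS]mxE -(c0 erefl (lift ord0 k)) /coef liftK.
have /submxP [a ha] : (y - P ord0 <= U)%MS.
  by apply: submx_full; rewrite row_full_unit -row_free_unit.
by exists (coef 1 a); rewrite // comb_coef -ha scale1r addrC subrK.
Qed.

Lemma general_position_aff_indep d (V : finType) (Vs S : {set V})
    (p : V -> 'rV[R]_d) :
  general_position Vs p -> S \subset Vs -> (d.+1 <= #|S|)%N ->
  exists2 c : 'I_d.+1 -> V, (forall k, c k \in S) & aff_indep (fun k => p (c k)).
Proof.
move=> gp sub_S card_S; pose c k := enum_val (widen_ord card_S k).
have cS k : c k \in S by exact: enum_valP.
exists c => //; apply: gp => [k l /enum_val_inj /(congr1 val) kl|k].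
  exact: val_inj.
exact: subsetP sub_S _ (cS k).
Qed.

Lemma congruentP d d' (V : finType) (Vs : {set V}) (p : V -> 'rV[R]_d)
    (q : V -> 'rV[R]_d') :
  congruent Vs p q <->
  {in Vs &, forall i j, sqdist (q i) (q j) = sqdist (p i) (p j)}.
Proof.
split=> pq i j iV jV; last by rewrite /edist; congr Num.sqrt; exact: pq.
have /(congr1 (fun t => t ^+ 2)) := pq i j iV jV.
by rewrite /edist !sqr_sqrtr //; exact: sqdist_ge0.
Qed.

(* Every point of [VA :|: VB] keeps under [q] its barycentric coordinates with
   respect to the shared frame [c]. *)
Lemma sqdist_glue n n' (V : finType) (VA VB : {set V}) (p : V -> 'rV[R]_n)
    (q : V -> 'rV[R]_n') (c : 'I_n.+1 -> V) :
  (forall k, c k \in VA :&: VB) -> aff_indep (fun k => p (c k)) ->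
  {in VA &, forall i j, sqdist (q i) (q j) = sqdist (p i) (p j)} ->
  {in VB &, forall i j, sqdist (q i) (q j) = sqdist (p i) (p j)} ->
  {in VA :|: VB &, forall i j, sqdist (q i) (q j) = sqdist (p i) (p j)}.
Proof.
move=> cAB indc pqA pqB.
have cA k : c k \in VA by case/setIP: (cAB k).
have coords x : x \in VA :|: VB -> exists2 b : 'I_n.+1 -> R,
    \sum_k b k = 1 & p x = \sum_k b k *: p (c k) /\ q x = \sum_k b k *: q (c k).
  move=> xAB; have [b b1 px] := aff_indep_span indc (p x).
  exists b => //; split => //; apply: affine_comb_transfer _ b1 px.
    by move=> k l; apply: pqA.
  case/setUP: xAB => [xA|xB] k; first exact: pqA.
  by apply: pqB => //; case/setIP: (cAB k).
move=> i j /coords [bi bi1 [-> ->]] /coords [bj bj1 [-> ->]].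
rewrite !sqdistE -!sumrB.
under eq_bigr do rewrite -scalerBl.
under [X in _ = dotv X _]eq_bigr do rewrite -scalerBl.
under [X in _ = dotv _ X]eq_bigr do rewrite -scalerBl.
apply: dotv_zero_sum_comb => [k l|]; first exact: pqA.
by rewrite sumrB bi1 bj1 subrr.
Qed.

End AffineFrames.

Section Frameworks.

Variables (R : realType) (V : finType).

Lemma universally_rigid_congruent d d' (Vs : {set V}) (E : rel V)
    (p0 p : V -> 'rV[R]_d) (q : V -> 'rV[R]_d') :
  (d <= d')%N -> universally_rigid Vs E p0 -> is_graph Vs E ->
  {in Vs, p =1 p0} ->
  (forall i j, E i j -> edist (q i) (q j) = edist (p i) (p j)) ->
  congruent Vs p q.
Proof.
move=> le_dd' ur [_ [_ EVs]] pp0 pq i j iV jV; rewrite !pp0 //.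
apply: (ur d' le_dd' q _ i j iV jV) => k l kl.
by have /andP [kV lV] := EVs k l kl; rewrite -!pp0 //; exact: pq.
Qed.

Variables (VA VB : {set V}) (EA EB : rel V).

Lemma attach_edgesA i j : EA i j -> attach_edges VA VB EA EB i j.
Proof. by move=> eij; rewrite /attach_edges /removed_edges eij /= andbF. Qed.

Lemma attach_edgesB i j : EB i j ->
  attach_edges VA VB EA EB i j || (i \in VA) && (j \in VA).
Proof.
move=> eij; rewrite /attach_edges eij orbT /=.
have [|//] := boolP (removed_edges VA VB EA EB i j).
by case/and4P=> _ _ /setIP [-> _] /setIP [-> _]; rewrite orbT.
Qed.

Lemma attach_confA d (pA pB : V -> 'rV[R]_d) :
  {in VA, attach_conf VA pA pB =1 pA}.
Proof. by move=> i iA; rewrite /attach_conf iA. Qed.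

Lemma attach_confB d (pA pB : V -> 'rV[R]_d) :
  {in VA :&: VB, pA =1 pB} -> {in VB, attach_conf VA pA pB =1 pB}.
Proof.
move=> agree i iB; rewrite /attach_conf; case: ifP => // iA.
by apply: agree; rewrite inE iA.
Qed.

End Frameworks.

Theorem theorem5 (R : realType) (d : nat) (V : finType)
    (VA VB : {set V}) (EA EB : rel V) (pA pB : V -> 'rV[R]_d) :
  (1 <= d)%N ->
  is_graph VA EA -> is_graph VB EB ->
  universally_rigid VA EA pA -> universally_rigid VB EB pB ->
  general_position VA pA -> general_position VB pB ->
  (VA :&: VB \proper VA) -> (VA :&: VB \proper VB) ->
  (d.+1 <= #|VA :&: VB|)%N ->
  (forall i, i \in VA :&: VB -> pA i = pB i) ->
  universally_rigid (VA :|: VB) (attach_edges VA VB EA EB)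
    (attach_conf VA pA pB).
Proof.
move=> _ gA gB urA urB gpA _ _ _ card_AB agree d' le_dd' q pq.
set p := attach_conf VA pA pB.
have congrA : congruent VA p q.
  apply: universally_rigid_congruent le_dd' urA gA (attach_confA pA pB) _.
  by move=> i j eij; apply/pq/attach_edgesA.
have congrB : congruent VB p q.
  apply: universally_rigid_congruent le_dd' urB gB (attach_confB agree) _.
  move=> i j /(attach_edgesB VA VB EA) /orP [/pq //|/andP [iA jA]].
  exact: congrA i j iA jA.
have [c cAB indc] := general_position_aff_indep gpA (subsetIl VA VB) card_AB.
apply/congruentP; apply: (sqdist_glue cAB); [|exact/congruentP..].
apply: eq_aff_indep indc => k; rewrite /p attach_confA //.
by case/setIP: (cAB k).
Qed.
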